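(* Let $\mathbf A$ be a WHB-algebra. The map $\Theta$ sending $Y\in DC(X(\mathbf A))$ to $\Theta(Y)=\{(a,b)\in A\times A\colon \sigma_{\mathbf A}(a)\cap Y=\sigma_{\mathbf A}(b)\cap Y\}$ is a bijection from $DC(X(\mathbf A))$ onto the congruence lattice $\mathrm{Con}(\mathbf A)$, with inverse $\theta\mapsto\Theta^{-1}(\theta)=\{P\in X(\mathbf A)\colon \text{for all }(a,b)\in\theta,\ a\in P\Rightarrow b\in P\}$; these maps reverse inclusion, so they constitute a dual lattice isomorphism between $\mathrm{Con}(\mathbf A)$ and $DC(X(\mathbf A))$.
   Context: A WHB-algebra is an algebra $(A,\wedge,\vee,\to,\leftarrow,0,1)$ such that $(A,\wedge,\vee,0,1)$ is a bounded distributive lattice and for all $a,b,c\in A$: $a\to a=1$; $a\to(b\wedge c)=(a\to b)\wedge(a\to c)$; $(a\vee b)\to c=(a\to c)\wedge(b\to c)$; $(a\to b)\wedge(b\to c)\le a\to c$; $a\leftarrow a=0$; $(a\vee b)\leftarrow c=(a\leftarrow c)\vee(b\leftarrow c)$; $a\leftarrow(b\wedge c)=(a\leftarrow b)\vee(a\leftarrow c)$; $a\leftarrow c\le(a\leftarrow b)\vee(b\leftarrow c)$; $a\wedge((a\to b)\leftarrow 0)\le b$; $a\le b\vee(1\to(a\leftarrow b))$. $X(\mathbf A)$ is the set of prime filters of $\mathbf A$, $\sigma_{\mathbf A}(a)=\{P\in X(\mathbf A)\colon a\in P\}$, and $\tau_{\mathbf A}$ is the topology on $X(\mathbf A)$ with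 subbase $\{\sigma_{\mathbf A}(a)\colon a\in A\}\cup\{X(\mathbf A)\setminus\sigma_{\mathbf A}(a)\colon a\in A\}$. Relations on $X(\mathbf A)$: $(P,Q)\in R_{\mathbf A}$ iff for all $a,b$, $a\to b\in P$ and $a\in Q$ imply $b\in Q$; $(P,Q)\in S_{\mathbf A}$ iff for all $a,b$, $a\in Q$ and $b\notin Q$ imply $a\leftarrow b\in P$. $DC(X(\mathbf A))$ is the set of $\tau_{\mathbf A}$-closed sets $Y\subseteq X(\mathbf A)$ such that $P\in Y$ and $(P,Q)\in R_{\mathbf A}$ imply $Q\in Y$, and $P\in Y$ and $(P,Q)\in S_{\mathbf A}$ imply $Q\in Y$, ordered by inclusion. *)

From Stdlib Require Import List.
Import ListNotations.

Record WHB := {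
  car :> Type;
  wmeet : car -> car -> car;
  wjoin : car -> car -> car;
  wimp  : car -> car -> car;
  wcoimp : car -> car -> car;
  wzero : car;
  wone : car;
  meetC : forall a b, wmeet a b = wmeet b a;
  meetA : forall a b c, wmeet a (wmeet b c) = wmeet (wmeet a b) c;
  joinC : forall a b, wjoin a b = wjoin b a;
  joinA : forall a b c, wjoin a (wjoin b c) = wjoin (wjoin a b) c;
  absorb_mj : forall a b, wmeet a (wjoin a b) = a;
  absorb_jm : forall a b, wjoin a (wmeet a b) = a;
  distr : forall a b c, wmeet a (wjoin b c) = wjoin (wmeet a b) (wmeet a c);
  join0 : forall a, wjoin a wzero = a;
  meet1 : forall a, wmeet a wone = a;
  imp_refl : forall a, wimp a a = wone;
  imp_meet : forall a b c, wimp a (wmeet b c) = wmeet (wimp a b) (wimp a c);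
  imp_join : forall a b c, wimp (wjoin a b) c = wmeet (wimp a c) (wimp b c);
  imp_trans : forall a b c,
      wmeet (wmeet (wimp a b) (wimp b c)) (wimp a c) = wmeet (wimp a b) (wimp b c);
  coimp_refl : forall a, wcoimp a a = wzero;
  coimp_join : forall a b c, wcoimp (wjoin a b) c = wjoin (wcoimp a c) (wcoimp b c);
  coimp_meet : forall a b c, wcoimp a (wmeet b c) = wjoin (wcoimp a b) (wcoimp a c);
  coimp_trans : forall a b c,
      wmeet (wcoimp a c) (wjoin (wcoimp a b) (wcoimp b c)) = wcoimp a c;
  mix1 : forall a b,
      wmeet (wmeet a (wcoimp (wimp a b) wzero)) b = wmeet a (wcoimp (wimp a b) wzero);
  mix2 : forall a b,
      wmeet a (wjoin b (wimp wone (wcoimp a b))) = a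
}.

Arguments wmeet {_}. Arguments wjoin {_}. Arguments wimp {_}.
Arguments wcoimp {_}. Arguments wzero {_}. Arguments wone {_}.

Definition wle {A : WHB} (a b : A) : Prop := wmeet a b = a.

Definition prime_filter {A : WHB} (P : A -> Prop) : Prop :=
  P wone /\ ~ P wzero /\
  (forall a b, P a -> wle a b -> P b) /\
  (forall a b, P a -> P b -> P (wmeet a b)) /\
  (forall a b, P (wjoin a b) -> P a \/ P b).

Definition X (A : WHB) : Type := { P : A -> Prop | prime_filter P }.

Definition sigma {A : WHB} (a : A) : X A -> Prop := fun P => proj1_sig P a.

Definition subbasic {A : WHB} (U : X A -> Prop) : Prop :=
  exists a : A, (forall P, U P <-> sigma a P) \/ (forall P, U P <-> ~ sigma a P).

(** open sets of the topology generated by the subbase: every point has a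
    finite intersection of subbasic sets containing it and contained in U *)
Definition tau_open {A : WHB} (U : X A -> Prop) : Prop :=
  forall P, U P ->
    exists l : list (X A -> Prop),
      (forall V, In V l -> subbasic V) /\
      (forall V, In V l -> V P) /\
      (forall Q, (forall V, In V l -> V Q) -> U Q).

Definition tau_closed {A : WHB} (Y : X A -> Prop) : Prop :=
  tau_open (fun P => ~ Y P).

Definition RA {A : WHB} (P Q : X A) : Prop :=
  forall a b : A, proj1_sig P (wimp a b) -> proj1_sig Q a -> proj1_sig Q b.

Definition SA {A : WHB} (P Q : X A) : Prop :=
  forall a b : A, proj1_sig Q a -> ~ proj1_sig Q b -> proj1_sig P (wcoimp a b).

Definition DC {A : WHB} (Y : X A -> Prop) : Prop :=
  tau_closed Y /\
  (forall P Q, Y P -> RA P Q -> Y Q) /\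
  (forall P Q, Y P -> SA P Q -> Y Q).

Definition congruence {A : WHB} (th : A -> A -> Prop) : Prop :=
  (forall a, th a a) /\
  (forall a b, th a b -> th b a) /\
  (forall a b c, th a b -> th b c -> th a c) /\
  (forall a b c d, th a b -> th c d -> th (wmeet a c) (wmeet b d)) /\
  (forall a b c d, th a b -> th c d -> th (wjoin a c) (wjoin b d)) /\
  (forall a b c d, th a b -> th c d -> th (wimp a c) (wimp b d)) /\
  (forall a b c d, th a b -> th c d -> th (wcoimp a c) (wcoimp b d)).

Definition Theta {A : WHB} (Y : X A -> Prop) : A -> A -> Prop :=
  fun a b => forall P, Y P -> (sigma a P <-> sigma b P).

Definition Theta_inv {A : WHB} (th : A -> A -> Prop) : X A -> Prop :=
  fun P => forall a b, th a b -> proj1_sig P a -> proj1_sig P b.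

(* Everything rests on a relative prime filter theorem: if a relation rho on
   A is transitive, contains the lattice order, and is closed under meets on
   the right and joins on the left, then any a, c with ~ rho a c are separated
   by a rho-closed prime filter (Zorn's lemma).  With rho x y the statement
   "x -> y in P", resp. "x <- y not in P", this yields the R- and S-successors
   of P that make Theta Y respect -> and <-; with rho x y := th (x /\ y) x it
   yields enough prime filters in Theta^-1 th to recover th.  Conversely, a
   closed Y is recovered from Theta Y because every point outside Y has a
   basic neighbourhood sigma a \ sigma b disjoint from Y, so that
   (a, a /\ b) is in Theta Y. *)

From Stdlib Require Import List.
Import ListNotations.
From mathcomp Require Import ssreflect ssrfun ssrbool boolp classical_sets.

Set Implicit Arguments.
Unset Strict Implicit.
Local Open Scope classical_set_scope.

Section Lattice.
Variable A : WHB.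
Implicit Types x y z : A.

Lemma wmeetxx x : wmeet x x = x.
Proof. by rewrite -{2}(absorb_jm A x x) absorb_mj. Qed.

Lemma wle_refl x : wle x x.
Proof. exact: wmeetxx. Qed.

Lemma wle_trans x y z : wle x y -> wle y z -> wle x z.
Proof. by rewrite /wle => xy yz; rewrite -xy -meetA yz. Qed.

Lemma wle_meetl x y : wle (wmeet x y) x.
Proof. by rewrite /wle -meetA [wmeet y x]meetC meetA wmeetxx. Qed.

Lemma wle_meetr x y : wle (wmeet x y) y.
Proof. by rewrite /wle -meetA wmeetxx. Qed.

Lemma wle_meet x y z : wle x y -> wle x z -> wle x (wmeet y z).
Proof. by rewrite /wle => xy xz; rewrite meetA xy. Qed.

Lemma wle_meet2 x y x' y' : wle x x' -> wle y y' -> wle (wmeet x y) (wmeet x' y').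
Proof.
move=> xx' yy'; apply: wle_meet.
- exact: wle_trans (wle_meetl _ _) xx'.
- exact: wle_trans (wle_meetr _ _) yy'.
Qed.

Lemma wle0x x : wle wzero x.
Proof. by rewrite /wle -{1}(join0 A x) joinC absorb_mj. Qed.

Lemma wlex1 x : wle x wone.
Proof. exact: meet1. Qed.

Lemma wle_joinl x y : wle x (wjoin x y).
Proof. exact: absorb_mj. Qed.

Lemma wle_joinr x y : wle y (wjoin x y).
Proof. by rewrite joinC; apply: absorb_mj. Qed.

Lemma wle_wimp1 x y : wle x y -> wimp x y = wone.
Proof.
rewrite /wle => xy.
by rewrite -[RHS](imp_refl A x) -{3}xy imp_meet imp_refl meetC meet1.
Qed.

Lemma wle_wcoimp0 x y : wle x y -> wcoimp x y = wzero.
Proof.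
rewrite /wle => xy.
by rewrite -[RHS](coimp_refl A x) -{3}xy coimp_meet coimp_refl joinC join0.
Qed.

End Lattice.

Section PrimeFilters.
Variables (A : WHB) (P : X A).
Implicit Types x y : A.

Lemma pf_top : proj1_sig P wone.
Proof. by case: (proj2_sig P). Qed.

Lemma pf_bot : ~ proj1_sig P wzero.
Proof. by case: (proj2_sig P) => _ [bot _]. Qed.

Lemma pf_up x y : proj1_sig P x -> wle x y -> proj1_sig P y.
Proof. by case: (proj2_sig P) => _ [_ [up _]]; apply: up. Qed.

Lemma pf_meetE x y : proj1_sig P (wmeet x y) <-> proj1_sig P x /\ proj1_sig P y.
Proof.
split=> [Pxy | [Px Py]]; last by case: (proj2_sig P) => _ [_ [_ [meet _]]]; apply: meet.
by split; apply: pf_up Pxy _; [apply: wle_meetl | apply: wle_meetr].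
Qed.

Lemma pf_joinE x y : proj1_sig P (wjoin x y) <-> proj1_sig P x \/ proj1_sig P y.
Proof.
split=> [| [Px | Py]]; first by case: (proj2_sig P) => _ [_ [_ [_ join]]]; apply: join.
- exact: pf_up Px (wle_joinl _ _).
- exact: pf_up Py (wle_joinr _ _).
Qed.

End PrimeFilters.

Definition compatible {A : WHB} (rho : A -> A -> Prop) : Prop :=
  [/\ forall x y z, rho x y -> rho y z -> rho x z,
      forall x y, wle x y -> rho x y,
      forall x y z, rho x y -> rho x z -> rho x (wmeet y z) &
      forall x y z, rho x z -> rho y z -> rho (wjoin x y) z].

Section Separation.
Variables (A : WHB) (rho : A -> A -> Prop).
Hypothesis rho_compat : compatible rho.

Let rho_trans x y z : rho x y -> rho y z -> rho x z.
Proof. by case: rho_compat => + _ _ _; apply. Qed.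

Let rho_le x y : wle x y -> rho x y.
Proof. by case: rho_compat => _ + _ _; apply. Qed.

Let rho_meet x y z : rho x y -> rho x z -> rho x (wmeet y z).
Proof. by case: rho_compat => _ _ + _; apply. Qed.

Let rho_join x y z : rho x z -> rho y z -> rho (wjoin x y) z.
Proof. by case: rho_compat => _ _ _; apply. Qed.

Let rho_meetl m m' u w : wle m m' -> rho (wmeet m' u) w -> rho (wmeet m u) w.
Proof. by move=> mm'; apply/rho_trans/rho_le/(wle_meet2 mm' (wle_refl u)). Qed.

Variables a c : A.
Hypothesis not_rho_ac : ~ rho a c.

(* The first clause says "G a" for nonempty G only: the empty set must belong
   to the family, as Zorn_bigcup also asks for an upper bound of the empty
   chain. *)
Definition separating (G : set A) : Prop :=
  [/\ forall x, G x -> G a,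
      forall x y, G x -> G y -> G (wmeet x y),
      forall x y, G x -> rho x y -> G y &
      ~ G c].

Lemma separating_upset : separating (rho a).
Proof.
split=> //; last exact: rho_trans.
- by move=> x _; apply/rho_le/wle_refl.
- exact: rho_meet.
Qed.

Lemma separating_bigcup (F : set (set A)) :
  F `<=` separating -> total_on F subset -> separating (\bigcup_(G in F) G).
Proof.
move=> Fsep Ftot; split.
- move=> x [G FG Gx]; exists G => //.
  by case: (Fsep G FG) => G_a _ _ _; apply: G_a Gx.
- move=> x y [G FG Gx] [H FH Hy].
  have [_ G_meet _ _] := Fsep G FG; have [_ H_meet _ _] := Fsep H FH.
  case: (Ftot G H FG FH) => [GH | HG].
  + by exists H => //; apply: H_meet (GH x Gx) Hy.
  + by exists G => //; apply: G_meet Gx (HG y Hy).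
- move=> x y [G FG Gx] rxy; exists G => //.
  by case: (Fsep G FG) => _ _ G_up _; apply: G_up Gx rxy.
- by case=> G FG; case: (Fsep G FG).
Qed.

Section Maximal.
Variable M : set A.
Hypotheses (M_sep : separating M) (M_max : forall B, M `<` B -> ~ separating B).

Lemma maximal_separating_mem : M a.
Proof.
have [M_a _ _ _] := M_sep.
apply: contrapT => notMa; apply: M_max separating_upset; split.
- by move=> x /M_a.
- by move=> /(_ a (rho_le (wle_refl a))).
Qed.

Lemma maximal_separating_extend u : ~ M u -> exists2 m, M m & rho (wmeet m u) c.
Proof.
move=> notMu; apply: contrapT => no_m.
have [_ M_meet _ _] := M_sep.
have Ma := maximal_separating_mem.
pose Mu w := exists2 m, M m & rho (wmeet m u) w.
have Mu_sep : separating Mu.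
  split=> [w _ | x y [m1 M1 r1] [m2 M2 r2] | x y [m Mm r] rxy | [m Mm r]].
  - by exists a => //; apply/rho_le/wle_meetl.
  - exists (wmeet m1 m2); first exact: M_meet.
    apply: rho_meet.
    + exact: rho_meetl (wle_meetl _ _) r1.
    + exact: rho_meetl (wle_meetr _ _) r2.
  - by exists m => //; apply: rho_trans r rxy.
  - by apply: no_m; exists m.
apply: M_max Mu_sep; split.
- by move=> w Mw; exists w => //; apply/rho_le/wle_meetl.
- move=> /(_ u) MuM; apply/notMu/MuM.
  by exists a => //; apply/rho_le/wle_meetr.
Qed.

Lemma maximal_separating_prime : prime_filter M.
Proof.
have [_ M_meet M_up notMc] := M_sep.
have Ma := maximal_separating_mem.
split; first exact/(M_up a)/rho_le/wlex1.
split; first by move=> /(M_up _ c) M0; apply/notMc/M0/rho_le/wle0x.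
split; first by move=> x y Mx /rho_le; apply: M_up.
split=> // y z Myz; apply: contrapT => /not_orP [].
move=> /maximal_separating_extend [m1 M1 r1] /maximal_separating_extend [m2 M2 r2].
apply: notMc; apply: (M_up (wmeet (wmeet m1 m2) (wjoin y z))).
  exact/M_meet/Myz/M_meet.
rewrite distr; apply: rho_join.
- exact: rho_meetl (wle_meetl _ _) r1.
- exact: rho_meetl (wle_meetr _ _) r2.
Qed.

End Maximal.

Lemma prime_filter_separation :
  exists Q : X A, [/\ proj1_sig Q a, ~ proj1_sig Q c &
    forall x y, proj1_sig Q x -> rho x y -> proj1_sig Q y].
Proof.
have [M [M_sep M_max]] := Zorn_bigcup separating_bigcup.
have [_ _ M_up notMc] := M_sep.
exists (exist _ M (maximal_separating_prime M_sep M_max)); split=> //.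
exact: maximal_separating_mem M_sep M_max.
Qed.

End Separation.

Section Duality.
Variable A : WHB.
Implicit Types (a b c d : A) (P Q : X A) (Y : X A -> Prop) (th : A -> A -> Prop).

Lemma wimp_compatible P : compatible (fun x y => proj1_sig P (wimp x y)).
Proof.
split=> [x y z rxy ryz | x y /wle_wimp1 -> | x y z rxy rxz | x y z rxz ryz].
- by apply: pf_up (imp_trans A x y z); apply/pf_meetE.
- exact: pf_top.
- by rewrite imp_meet; apply/pf_meetE.
- by rewrite imp_join; apply/pf_meetE.
Qed.

Lemma wcoimp_compatible P : compatible (fun x y => ~ proj1_sig P (wcoimp x y)).
Proof.
split=> [x y z rxy ryz | x y /wle_wcoimp0 -> | x y z rxy rxz | x y z rxz ryz].
- by move=> /pf_up /(_ (coimp_trans A x y z)) /pf_joinE [].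
- exact: pf_bot.
- by rewrite coimp_meet => /pf_joinE [].
- by rewrite coimp_join => /pf_joinE [].
Qed.

Lemma congruence_compatible th :
  congruence th -> compatible (fun x y => th (wmeet x y) x).
Proof.
move=> [th_refl [th_sym [th_trans [th_meet [th_join _]]]]].
split=> [x y z rxy ryz | x y -> // | x y z rxy rxz | x y z rxz ryz].
- apply: (th_trans _ _ _ (th_meet _ _ _ _ (th_sym _ _ rxy) (th_refl z))).
  rewrite -meetA; apply: (th_trans _ _ _ _ rxy).
  exact: th_meet (th_refl x) ryz.
- by rewrite meetA; apply: th_trans (th_meet _ _ _ _ rxy (th_refl z)) rxz.
- by rewrite meetC distr ![wmeet z _]meetC; apply: th_join.
Qed.

Lemma RA_separation P a c : ~ proj1_sig P (wimp a c) ->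
  exists Q, [/\ RA P Q, proj1_sig Q a & ~ proj1_sig Q c].
Proof.
move=> Pac; have [Q [Qa Qc Q_up]] := prime_filter_separation (wimp_compatible P) Pac.
by exists Q; split=> // x y Pxy Qx; apply: Q_up Qx Pxy.
Qed.

Lemma SA_separation P a c : proj1_sig P (wcoimp a c) ->
  exists Q, [/\ SA P Q, proj1_sig Q a & ~ proj1_sig Q c].
Proof.
move=> Pac.
have [Q [Qa Qc Q_up]] :=
  prime_filter_separation (wcoimp_compatible P) (fun nPac => nPac Pac).
exists Q; split=> // x y Qx Qy; apply: contrapT => Pxy.
exact/Qy/Q_up/Pxy.
Qed.

Lemma Theta_inv_separation th a c : congruence th -> ~ th (wmeet a c) a ->
  exists Q, [/\ Theta_inv th Q, proj1_sig Q a & ~ proj1_sig Q c].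
Proof.
move=> th_con ac.
have [Q [Qa Qc Q_up]] := prime_filter_separation (congruence_compatible th_con) ac.
exists Q; split=> // x y xy Qx; apply: Q_up Qx _.
have [th_refl [th_sym [th_trans [th_meet _]]]] := th_con.
apply: (th_trans _ _ _ (th_meet _ _ _ _ (th_refl x) (th_sym _ _ xy))).
by rewrite wmeetxx.
Qed.

Lemma Theta_sym Y a b : Theta Y a b -> Theta Y b a.
Proof. by move=> ab P YP; apply: iff_sym; apply: ab. Qed.

Lemma Theta_op_congr (op : A -> A -> A) Y :
  (forall a b c d P, Theta Y a b -> Theta Y c d -> Y P ->
     sigma (op a c) P -> sigma (op b d) P) ->
  forall a b c d, Theta Y a b -> Theta Y c d -> Theta Y (op a c) (op b d).
Proof.
move=> op_mono a b c d ab cd P YP; split; first exact: op_mono.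
by apply: op_mono YP; apply: Theta_sym.
Qed.

Lemma Theta_wimp_mono Y : (forall P Q, Y P -> RA P Q -> Y Q) ->
  forall a b c d P, Theta Y a b -> Theta Y c d -> Y P ->
    sigma (wimp a c) P -> sigma (wimp b d) P.
Proof.
move=> Y_R a b c d P ab cd YP Pac; apply: contrapT => /RA_separation [Q [PQ Qb Qd]].
have YQ := Y_R P Q YP PQ.
by apply/Qd/(cd Q YQ)/(PQ a c Pac)/(ab Q YQ).
Qed.

Lemma Theta_wcoimp_mono Y : (forall P Q, Y P -> SA P Q -> Y Q) ->
  forall a b c d P, Theta Y a b -> Theta Y c d -> Y P ->
    sigma (wcoimp a c) P -> sigma (wcoimp b d) P.
Proof.
move=> Y_S a b c d P ab cd YP /SA_separation [Q [PQ Qa Qc]].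
have YQ := Y_S P Q YP PQ.
by apply: PQ; [apply/(ab Q YQ) | move=> /(cd Q YQ)].
Qed.

Lemma Theta_congruence Y : DC Y -> congruence (Theta Y).
Proof.
move=> [_ [Y_R Y_S]].
split; first by move=> a P _.
split; first exact: Theta_sym.
split; first by move=> a b c ab bc P YP; apply: iff_trans (ab P YP) (bc P YP).
split.
  apply: Theta_op_congr => a b c d P ab cd YP.
  by move=> /pf_meetE [/(ab P YP) Pb /(cd P YP) Pd]; apply/pf_meetE.
split.
  apply: Theta_op_congr => a b c d P ab cd YP.
  by move=> /pf_joinE [/(ab P YP) | /(cd P YP)] Px; apply/pf_joinE; [left | right].
split; apply: Theta_op_congr; [exact: Theta_wimp_mono | exact: Theta_wcoimp_mono].
Qed.

Lemma Theta_inv_closed th : tau_closed (Theta_inv th).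
Proof.
move=> P /existsNP [a /existsNP [b /not_implyP [ab /not_implyP [Pa Pb]]]].
exists [sigma a; fun Q => ~ sigma b Q]; split; [|split].
- by move=> V [<- | [<- | []]]; [exists a; left | exists b; right].
- by move=> V [<- | [<- | []]].
- move=> Q QV /(_ a b ab (QV _ (or_introl erefl))).
  by apply: (QV (fun Q => ~ sigma b Q)); right; left.
Qed.

Lemma Theta_inv_DC th : congruence th -> DC (Theta_inv th).
Proof.
move=> [th_refl [_ [_ [_ [_ [th_imp th_coimp]]]]]].
split; first exact: Theta_inv_closed.
split=> P Q P_th PQ a b ab Qa.
- apply: PQ Qa; apply: P_th (pf_top P).
  by rewrite -(imp_refl A a); apply: th_imp.
- apply: contrapT => Qb; apply: (pf_bot (P := P)); apply: P_th (PQ a b Qa Qb).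
  by rewrite -(coimp_refl A b); apply: th_coimp.
Qed.

Lemma subbasic_neighbourhood P (l : list (X A -> Prop)) :
  (forall V, In V l -> subbasic V) -> (forall V, In V l -> V P) ->
  exists a b, [/\ proj1_sig P a, ~ proj1_sig P b &
    forall Q, proj1_sig Q a -> ~ proj1_sig Q b -> forall V, In V l -> V Q].
Proof.
elim: l => [_ _ | V l IHl l_sub l_P].
  by exists wone, wzero; split=> //; [apply: pf_top | apply: pf_bot].
have [a [b [Pa Pb lQ]]] :=
  IHl (fun W lW => l_sub W (or_intror lW)) (fun W lW => l_P W (or_intror lW)).
have VP := l_P V (or_introl erefl).
have [e [Ve | Ve]] := l_sub V (or_introl erefl).
- exists (wmeet a e), b; split=> //.
    by apply/pf_meetE; split=> //; apply/Ve.
  move=> Q /pf_meetE [Qa Qe] Qb W [<- | lW]; first exact/Ve.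
  exact: lQ.
- exists a, (wjoin b e); split=> //.
    by move=> /pf_joinE [// | Pe]; apply: (proj1 (Ve P) VP).
  move=> Q Qa Qbe W [<- | lW].
    by apply/Ve => Qe; apply/Qbe/pf_joinE; right.
  by apply: lQ => // Qb; apply/Qbe/pf_joinE; left.
Qed.

Lemma tau_closed_separation Y P : tau_closed Y -> ~ Y P ->
  exists a b, [/\ proj1_sig P a, ~ proj1_sig P b &
    forall Q, Y Q -> proj1_sig Q a -> proj1_sig Q b].
Proof.
move=> Y_closed /Y_closed [l [l_sub [l_P l_Y]]].
have [a [b [Pa Pb lQ]]] := subbasic_neighbourhood l_sub l_P.
exists a, b; split=> // Q YQ Qa; apply: contrapT => Qb.
exact: l_Y Q (lQ Q Qa Qb) YQ.
Qed.

Lemma Theta_invK Y : tau_closed Y -> forall P, Theta_inv (Theta Y) P <-> Y P.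
Proof.
move=> Y_closed P; split=> [P_Theta | YP a b ab]; last exact: (proj1 (ab P YP)).
apply: contrapT => /(tau_closed_separation Y_closed) [a [b [Pa Pb ab]]].
have ab_Theta : Theta Y a (wmeet a b).
  move=> Q YQ; split=> [Qa | /pf_meetE [] //].
  by apply/pf_meetE; split=> //; apply: ab.
by apply/Pb; have /pf_meetE [] := P_Theta _ _ ab_Theta Pa.
Qed.

Lemma ThetaK th : congruence th ->
  forall a b, Theta (Theta_inv th) a b <-> th a b.
Proof.
move=> th_con a b; have [_ [th_sym [th_trans _]]] := th_con.
split=> [ab | ab P P_th]; last by split; apply: P_th; last apply: th_sym.
have meet_th x y : Theta (Theta_inv th) x y -> th (wmeet x y) x.
  move=> xy; apply: contrapT => /(Theta_inv_separation th_con) [Q [Q_th Qx Qy]].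
  exact/Qy/(xy Q Q_th).
apply: (th_trans _ _ _ (th_sym _ _ (meet_th a b ab))).
by rewrite meetC; apply: meet_th; apply: Theta_sym.
Qed.

End Duality.

Theorem theorem5p10 (A : WHB) :
  (* Theta maps DC(X(A)) into Con(A), Theta^{-1} maps Con(A) into DC(X(A)) *)
  (forall Y : X A -> Prop, DC Y -> congruence (Theta Y)) /\
  (forall th : A -> A -> Prop, congruence th -> DC (Theta_inv th)) /\
  (* they are mutually inverse *)
  (forall Y : X A -> Prop, DC Y -> forall P, Theta_inv (Theta Y) P <-> Y P) /\
  (forall th : A -> A -> Prop, congruence th ->
     forall a b, Theta (Theta_inv th) a b <-> th a b) /\
  (* they reverse inclusion *)
  (forall Y1 Y2 : X A -> Prop, DC Y1 -> DC Y2 ->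
     ((forall P, Y1 P -> Y2 P) <->
      (forall a b, Theta Y2 a b -> Theta Y1 a b))) /\
  (forall th1 th2 : A -> A -> Prop, congruence th1 -> congruence th2 ->
     ((forall a b, th1 a b -> th2 a b) <->
      (forall P, Theta_inv th2 P -> Theta_inv th1 P))).
Proof.
have Theta_invK_DC (Y : X A -> Prop) (Y_DC : DC Y) := Theta_invK Y_DC.1.
split; first exact: Theta_congruence.
split; first exact: Theta_inv_DC.
split; first exact: Theta_invK_DC.
split; first exact: ThetaK.
split=> [Y1 Y2 DC1 DC2 | th1 th2 con1 con2]; split.
- by move=> Y12 a b ab P /Y12 /ab.
- move=> Theta21 P /(Theta_invK_DC _ DC1) P1; apply/(Theta_invK_DC _ DC2).
  by move=> a b /Theta21 /P1.
- by move=> th12 P P2 a b /th12 /P2.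
- move=> Theta_inv21 a b /(ThetaK con1) ab; apply/(ThetaK con2).
  by move=> P /Theta_inv21 /ab.
Qed.
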